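(* Let $A$ and $B$ be countable groups equipped with left-invariant proper metrics, and equip the free product $G=A\ast B$ with the natural left-invariant proper metric induced from $A$ and $B$. If $A$ and $B$ have asymptotic property C, then $G$ has asymptotic property C.
   Context: Writing $\|\cdot\|_A,\|\cdot\|_B$ for the norms $\|a\|=d(e,a)$, the natural metric on $A\ast B$ is $d(g,h)=\|g^{-1}h\|$, where for $g$ with normal form $g=g_1\cdots g_\ell$ (each $g_i$ a non-trivial element of $A$ or $B$, consecutive ones from different factors) $\|g\|=\sum_i\|g_i\|$. A metric is proper if bounded sets are finite. A metric space $X$ has asymptotic property C if for every sequence $R_1\le R_2\le\cdots$ of positive numbers there exist $n$ and families $\mathcal U^1,\dots,\mathcal U^n$ of subsets, each uniformly bounded (sup of diameters finite), with $\mathcal U^i$ $R_i$-disjoint (distinct members at distance $>R_i$), whose union covers $X$. *)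

From HB Require Import structures.
From mathcomp Require Import all_boot all_order all_algebra.
From mathcomp Require Import reals.
From Stdlib Require Lists.List.
Set Implicit Arguments. Unset Strict Implicit. Unset Printing Implicit Defensive.
Import Order.TTheory GRing.Theory Num.Theory.
Local Open Scope ring_scope.

Definition is_group (T : Type) (mul : T -> T -> T) (inv : T -> T) (e : T) : Prop :=
  (forall x y z, mul x (mul y z) = mul (mul x y) z) /\
  (forall x, mul e x = x) /\ (forall x, mul x e = x) /\
  (forall x, mul (inv x) x = e) /\ (forall x, mul x (inv x) = e).

Definition countable_type (T : Type) : Prop := exists f : T -> nat, injective f.

Definition is_metric (R : realType) (T : Type) (d : T -> T -> R) : Prop :=
  (forall x y, 0 <= d x y) /\ (forall x y, d x y = 0 <-> x = y) /\
  (forall x y, d x y = d y x) /\ (forall x y z, d x z <= d x y + d y z).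

Definition left_invariant (R : realType) (T : Type) (mul : T -> T -> T)
  (d : T -> T -> R) : Prop := forall g x y, d (mul g x) (mul g y) = d x y.

Definition finite_pred (T : Type) (S : T -> Prop) : Prop :=
  exists s : list T, forall x, S x -> Stdlib.Lists.List.In x s.

Definition bounded_pred (R : realType) (T : Type) (d : T -> T -> R) (S : T -> Prop) : Prop :=
  exists r : R, forall x y, S x -> S y -> d x y <= r.

Definition proper_metric (R : realType) (T : Type) (d : T -> T -> R) : Prop :=
  forall S : T -> Prop, bounded_pred d S -> finite_pred S.

Definition unif_bounded (R : realType) (T : Type) (d : T -> T -> R)
  (F : (T -> Prop) -> Prop) : Prop :=
  exists D : R, forall V, F V -> forall x y, V x -> V y -> d x y <= D.

Definition r_disjoint (R : realType) (T : Type) (d : T -> T -> R) (r : R)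
  (F : (T -> Prop) -> Prop) : Prop :=
  forall V W, F V -> F W -> V <> W -> forall x y, V x -> W y -> r < d x y.

(* asymptotic property C; the sequence R_1 <= R_2 <= ... is indexed from 0 here *)
Definition asymptotic_property_C (R : realType) (T : Type) (d : T -> T -> R) : Prop :=
  forall Rs : nat -> R, (forall i, 0 < Rs i) -> (forall i, Rs i <= Rs i.+1) ->
  exists n : nat, exists U : nat -> ((T -> Prop) -> Prop),
    (forall i, (i < n)%N -> unif_bounded d (U i) /\ r_disjoint d (Rs i) (U i)) /\
    (forall x, exists i, (i < n)%N /\ exists V, U i V /\ V x).

Section FreeProduct.
Variables (A B : eqType) (mulA : A -> A -> A) (invA : A -> A) (eA : A)
          (mulB : B -> B -> B) (invB : B -> B) (eB : B).

Definition fp_nontriv (x : A + B) : bool :=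
  match x with inl a => a != eA | inr b => b != eB end.

Definition fp_same_factor (x y : A + B) : bool :=
  match x, y with inl _, inl _ => true | inr _, inr _ => true | _, _ => false end.

Definition fp_reduced (w : seq (A + B)) : bool :=
  all fp_nontriv w && sorted (fun x y => ~~ fp_same_factor x y) w.

Definition fp_push (x : A + B) (w : seq (A + B)) : seq (A + B) :=
  if ~~ fp_nontriv x then w else
  match x, w with
  | inl a, inl a' :: w' => let c := mulA a a' in if c == eA then w' else inl c :: w'
  | inr b, inr b' :: w' => let c := mulB b b' in if c == eB then w' else inr c :: w'
  | _, _ => x :: w
  end.

Definition fp_mul (u w : seq (A + B)) : seq (A + B) := foldr fp_push w u.

Definition fp_inv_letter (x : A + B) : A + B :=
  match x with inl a => inl (invA a) | inr b => inr (invB b) end.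

Definition fp_inv (u : seq (A + B)) : seq (A + B) := rev (map fp_inv_letter u).

Definition FreeProd : Type := {w : seq (A + B) | fp_reduced w}.

Variables (R : realType) (dA : A -> A -> R) (dB : B -> B -> R).

Definition fp_norm (w : seq (A + B)) : R :=
  \sum_(x <- w) (match x with inl a => dA eA a | inr b => dB eB b end).

Definition fp_dist (g h : FreeProd) : R :=
  fp_norm (fp_mul (fp_inv (proj1_sig g)) (proj1_sig h)).

End FreeProduct.

Arguments fp_dist {A B} mulA invA eA mulB invB eB {R} dA dB g h.

From HB Require Import structures.
From mathcomp Require Import all_boot all_order all_algebra.
From mathcomp Require Import reals.
From mathcomp Require Import lra zify.
Set Implicit Arguments. Unset Strict Implicit. Unset Printing Implicit Defensive.
Import Order.TTheory GRing.Theory Num.Theory.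
Local Open Scope ring_scope.

(* The letters of A * B form the wedge of A and B glued at their identities, which
   inherits asymptotic property C by interleaving the covers of A and B.  To cover
   A * B, cut it into layers k L <= |g| < (k+1) L for a width L large compared with
   the disjointness scales, and sort an element of layer k by the prefix of its
   normal form before norm depth k L - L/2 and by the member of the letter cover
   containing the letter that crosses that depth.  Two elements of one bucket agree
   up to the crossing letter, so buckets are uniformly bounded; two elements in
   different buckets of one layer either branch before the crossing depth, and are
   then at least L/2 apart, or differ at the crossing letter by more than its
   disjointness scale.  Putting the layers of one parity in each family keeps
   different buckets of a family L apart. *)

Section GroupWithInvariantMetric.
Variables (T : Type) (mul : T -> T -> T) (inv : T -> T) (e : T).
Hypothesis groupT : is_group mul inv e.

Lemma inv_unit : inv e = e.
Proof. by case: groupT => _ [_ [mulx1 [mulVx _]]]; rewrite -{2}(mulVx e) mulx1. Qed.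

Lemma inv_eq_unit a : inv a = e -> a = e.
Proof. by case: groupT => _ [mul1x [_ [mulVx _]]] Ha; rewrite -(mulVx a) Ha mul1x. Qed.

Lemma mulV_unit_eq a b : mul (inv a) b = e -> a = b.
Proof.
case: groupT => mulA [mul1x [mulx1 [_ mulxV]]] Hab.
by rewrite -(mul1x b) -(mulxV a) -mulA Hab mulx1.
Qed.

Variables (R : realType) (d : T -> T -> R).
Hypotheses (metric_d : is_metric d) (invariant_d : left_invariant mul d).

Lemma dist_unit_mulV a b : d e (mul (inv a) b) = d a b.
Proof.
case: groupT => mulA [mul1x [mulx1 [_ mulxV]]].
by rewrite -(invariant_d a) mulA mulxV mul1x mulx1.
Qed.

Lemma dist_unit_inv a : d e (inv a) = d e a.
Proof.
case: groupT => _ [_ [mulx1 [_ mulxV]]]; case: metric_d => _ [_ [dC _]].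
by rewrite -(invariant_d a) mulxV mulx1 dC.
Qed.

End GroupWithInvariantMetric.

Lemma nondecreasing_step (R : realType) (u : nat -> R) :
  (forall i, u i <= u i.+1) -> {homo u : i j / (i <= j)%N >-> i <= j}.
Proof. by move=> u_step; apply: homo_leq => // [y x z]; exact: le_trans. Qed.

Section UniformFamilies.
Variables (R : realType) (T : Type) (d : T -> T -> R).

Lemma r_disjoint_le r r' F : r <= r' -> r_disjoint d r' F -> r_disjoint d r F.
Proof.
move=> le_rr' Fr' V W FV FW VW x y Vx Wy.
exact: le_lt_trans le_rr' (Fr' V W FV FW VW x y Vx Wy).
Qed.

(* Each [U i] serves at both indices [2i] and [2i+1]; the families past the cover
   are replaced by the empty family, so that the bounds hold at every index. *)
Lemma asymptotic_property_C_pairs : asymptotic_property_C d ->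
  forall Rs : nat -> R, (forall i, 0 < Rs i) -> (forall i, Rs i <= Rs i.+1) ->
  exists n : nat, exists U : nat -> ((T -> Prop) -> Prop),
    [/\ forall i, unif_bounded d (U i), forall j, r_disjoint d (Rs j) (U j./2)
      & forall x, exists i, (i < n)%N /\ exists V, U i V /\ V x].
Proof.
move=> apcT Rs Rs_gt0 Rs_step.
have Rs_mono := nondecreasing_step Rs_step.
have [n [U [U_ok U_cover]]] :=
  apcT (fun i => Rs i.*2.+1) (fun i => Rs_gt0 _) (fun i => Rs_mono _ _ (leqW (leqnSn _))).
exists n, (fun i => if (i < n)%N then U i else fun _ => False); split.
- move=> i; case: ifP => [/U_ok [] //|_].
  by exists 0 => ? [].
- move=> j; case: ifP => [/U_ok [_]|_]; last by move=> ? ? [].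
  by apply: r_disjoint_le; apply: Rs_mono; lia.
- move=> x; have [i [lt_in [V [UV Vx]]]] := U_cover x.
  by exists i; split => //; exists V; rewrite lt_in.
Qed.

End UniformFamilies.

Section IsometricImage.
Variables (R : realType) (X Y : Type) (dX : X -> X -> R) (dY : Y -> Y -> R) (f : X -> Y).
Hypothesis f_isometry : forall x x', dY (f x) (f x') = dX x x'.

Definition image_set (V : X -> Prop) : Y -> Prop := fun y => exists2 x, y = f x & V x.

Definition image_family (F : (X -> Prop) -> Prop) : (Y -> Prop) -> Prop :=
  fun W => exists2 V, F V & W = image_set V.

Lemma unif_bounded_image F : unif_bounded dX F -> unif_bounded dY (image_family F).
Proof.
move=> [D FD]; exists D => W [V FV ->] y y' [x -> Vx] [x' -> Vx'].
by rewrite f_isometry; exact: (FD V FV).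
Qed.

Lemma r_disjoint_image r F : r_disjoint dX r F -> r_disjoint dY r (image_family F).
Proof.
move=> Fr V' W' [V FV ->] [W FW ->] VW z z' [x -> Vx] [y -> Wy].
by rewrite f_isometry; apply: (Fr V W) => // EVW; apply: VW; rewrite EVW.
Qed.

End IsometricImage.

(* [wedge_dist] is the restriction of [fp_dist] to one-letter words. *)
Section Wedge.
Variables (A B : Type) (eA : A) (eB : B) (R : realType) (dA : A -> A -> R) (dB : B -> B -> R).

Definition wedge_norm (x : A + B) : R :=
  match x with inl a => dA eA a | inr b => dB eB b end.

Definition wedge_dist (x y : A + B) : R :=
  match x, y with
  | inl a, inl a' => dA a a'
  | inr b, inr b' => dB b b'
  | _, _ => wedge_norm x + wedge_norm y
  end.

Lemma wedge_apc : asymptotic_property_C dA -> asymptotic_property_C dB ->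
  asymptotic_property_C wedge_dist.
Proof.
move=> apcA apcB Rs Rs_gt0 Rs_step.
have [nA [UA [UA_bd UA_dis coverA]]] := asymptotic_property_C_pairs apcA Rs_gt0 Rs_step.
have [nB [UB [UB_bd UB_dis coverB]]] := asymptotic_property_C_pairs apcB Rs_gt0 Rs_step.
exists (maxn nA nB).*2, (fun j => if odd j then image_family inr (UB j./2)
                                            else image_family inl (UA j./2)).
split.
  by move=> j _; case: ifP => _; (split; [exact: unif_bounded_image | exact: r_disjoint_image]).
case=> [a|b].
  have [i [lt_inA [V [UV Va]]]] := coverA a.
  exists i.*2; split; first by lia.
  rewrite odd_double doubleK; exists (image_set inl V).
  by split; [exists V | exists a].
have [i [lt_inB [V [UV Vb]]]] := coverB b.
exists i.*2.+1; split; first by lia.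
rewrite /= odd_double uphalf_double; exists (image_set inr V).
by split; [exists V | exists b].
Qed.

End Wedge.

Section FreeProductWords.
Variables (A B : eqType) (mulA : A -> A -> A) (invA : A -> A) (eA : A)
  (mulB : B -> B -> B) (invB : B -> B) (eB : B)
  (R : realType) (dA : A -> A -> R) (dB : B -> B -> R).
Hypotheses (groupA : is_group mulA invA eA) (groupB : is_group mulB invB eB)
  (metric_dA : is_metric dA) (invariant_dA : left_invariant mulA dA)
  (metric_dB : is_metric dB) (invariant_dB : left_invariant mulB dB).

Local Notation push := (fp_push mulA eA mulB eB).
Local Notation fmul := (fp_mul mulA eA mulB eB).
Local Notation finv := (fp_inv invA invB).
Local Notation red := (fp_reduced eA eB).
Local Notation ntr := (fp_nontriv eA eB).
Local Notation sf := (@fp_same_factor A B).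
Local Notation ilet := (fp_inv_letter invA invB).
Local Notation nm := (fp_norm eA eB dA dB).
Local Notation nrm := (wedge_norm eA eB dA dB).
Local Notation ldist := (wedge_dist eA eB dA dB).

Definition word_dist (g h : seq (A + B)) : R := nm (fmul (finv g) h).
Local Notation D := word_dist.

Lemma wedge_norm_ge0 x : 0 <= nrm x.
Proof. by case: x => [a|b] /=; [case: metric_dA => -> | case: metric_dB => ->]. Qed.

Lemma wedge_dist_ge0 x y : 0 <= ldist x y.
Proof.
case: metric_dA => dA_ge0 _; case: metric_dB => dB_ge0 _.
have := wedge_norm_ge0 x; have := wedge_norm_ge0 y.
by case: x => [a|b]; case: y => [a'|b'] /= *; rewrite ?dA_ge0 ?dB_ge0 //; lra.
Qed.

Lemma wedge_dist_xx x : ldist x x = 0.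
Proof.
case: metric_dA => _ [dA0 _]; case: metric_dB => _ [dB0 _].
by case: x => [a|b] /=; [apply/dA0 | apply/dB0].
Qed.

Lemma wedge_distC x y : ldist x y = ldist y x.
Proof.
case: metric_dA => _ [_ [dAC _]]; case: metric_dB => _ [_ [dBC _]].
by case: x => [a|b]; case: y => [a'|b'] //=; lra.
Qed.

Lemma wedge_dist_le_norm x y : ldist x y <= nrm x + nrm y.
Proof.
case: metric_dA => _ [_ [dAC dA_tri]]; case: metric_dB => _ [_ [dBC dB_tri]].
case: x => [a|b]; case: y => [a'|b'] //=.
- by rewrite (dAC eA a); apply: dA_tri.
- by rewrite (dBC eB b); apply: dB_tri.
Qed.

Lemma wedge_norm_le x y : nrm y <= nrm x + ldist x y.
Proof.
case: metric_dA => _ [_ [_ dA_tri]]; case: metric_dB => _ [_ [_ dB_tri]].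
have := wedge_norm_ge0 x; have := wedge_norm_ge0 y.
by case: x => [a|b]; case: y => [a'|b'] /= *; rewrite ?addrA; try lra;
  [apply: dA_tri | apply: dB_tri].
Qed.

Lemma fp_norm_nil : nm [::] = 0.
Proof. exact: big_nil. Qed.

Lemma fp_norm_cons x w : nm (x :: w) = nrm x + nm w.
Proof. exact: big_cons. Qed.

Lemma fp_norm_cat u w : nm (u ++ w) = nm u + nm w.
Proof. exact: big_cat. Qed.

Lemma fp_norm_ge0 w : 0 <= nm w.
Proof. by apply: sumr_ge0 => x _; exact: wedge_norm_ge0. Qed.

Lemma fp_norm_inv w : nm (finv w) = nm w.
Proof.
rewrite /fp_norm /fp_inv big_rev big_map; apply: eq_bigr => -[a|b] _ /=.
- exact: (dist_unit_inv groupA metric_dA invariant_dA).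
- exact: (dist_unit_inv groupB metric_dB invariant_dB).
Qed.

Lemma fp_mul_cat u v w : fmul (u ++ v) w = fmul u (fmul v w).
Proof. exact: foldr_cat. Qed.

Lemma fp_mul_inv_cons x g w : fmul (finv (x :: g)) w = fmul (finv g) (push (ilet x) w).
Proof. by rewrite /fp_inv map_cons rev_cons -cats1 fp_mul_cat. Qed.

Lemma fp_nontriv_inv x : ntr (ilet x) = ntr x.
Proof.
case: x => [a|b] /=.
- case: (eqVneq a eA) => [->|ne]; first by rewrite (inv_unit groupA) eqxx.
  by apply: contraNneq ne => /(inv_eq_unit groupA) ->.
- case: (eqVneq b eB) => [->|ne]; first by rewrite (inv_unit groupB) eqxx.
  by apply: contraNneq ne => /(inv_eq_unit groupB) ->.
Qed.

Lemma fp_same_factor_invl x y : sf (ilet x) y = sf x y.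
Proof. by case: x; case: y. Qed.

Lemma fp_same_factorC x y : sf x y = sf y x.
Proof. by case: x; case: y. Qed.

Lemma fp_same_factor_trans x y z : sf x y -> sf x z = sf y z.
Proof. by case: x; case: y; case: z. Qed.

Lemma fp_push_inv_cancel x w : ntr x -> push (ilet x) (x :: w) = w.
Proof.
move=> ntr_x; rewrite /fp_push fp_nontriv_inv ntr_x /=.
case: x ntr_x => [a|b] _ /=.
- by case: groupA => _ [_ [_ [-> _]]]; rewrite eqxx.
- by case: groupB => _ [_ [_ [-> _]]]; rewrite eqxx.
Qed.

Lemma fp_push_inv_merge x y w : ntr x -> x != y -> sf x y ->
  exists c, [/\ push (ilet x) (y :: w) = c :: w, ntr c, sf c y & nrm c = ldist x y].
Proof.
move=> ntr_x; have := fp_nontriv_inv x; rewrite ntr_x /fp_push => ->.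
case: x y {ntr_x} => [a|b] [a'|b'] // ne _ /=.
- have ne_e : mulA (invA a) a' != eA.
    by apply: contraNneq ne => /(mulV_unit_eq groupA) ->.
  rewrite (negPf ne_e); exists (inl (mulA (invA a) a')); split => //.
  exact: (dist_unit_mulV groupA invariant_dA).
- have ne_e : mulB (invB b) b' != eB.
    by apply: contraNneq ne => /(mulV_unit_eq groupB) ->.
  rewrite (negPf ne_e); exists (inr (mulB (invB b) b')); split => //.
  exact: (dist_unit_mulV groupB invariant_dB).
Qed.

Lemma fp_push_cons x w : ntr x -> (if w is y :: _ then ~~ sf x y else true) ->
  push x w = x :: w.
Proof.
move=> ntr_x; rewrite /fp_push ntr_x /=.
case: w => [|y w]; case: x {ntr_x} => // ? ; by case: y.
Qed.

Lemma fp_reduced_cons x w : red (x :: w) =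
  [&& ntr x, red w & if w is y :: _ then ~~ sf x y else true].
Proof.
rewrite /fp_reduced /=; case: w => [|y w] /=; first by rewrite !andbT.
by rewrite !andbA; case: (ntr x); case: (ntr y); case: (all _ w); case: (sf x y);
  case: (path _ y w).
Qed.

Lemma fp_reduced_behead x w : red (x :: w) -> red w.
Proof. by rewrite fp_reduced_cons => /and3P []. Qed.

Lemma fp_mul_reduced u w : red (u ++ w) -> fmul u w = u ++ w.
Proof.
elim: u => [|x u IH] //= /[dup] /fp_reduced_behead red_uw.
rewrite fp_reduced_cons => /and3P [ntr_x _ head_x].
by rewrite IH // fp_push_cons.
Qed.

Lemma fp_reduced_inv_cat g w : red g -> red w ->
  (if g is x :: _ then if w is y :: _ then ~~ sf x y else true else true) ->
  red (finv g ++ w).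
Proof.
elim: g w => [|x g IH] w //= red_xg red_w head_xw.
rewrite /fp_inv map_cons rev_cons -cats1 -catA cat1s.
move: red_xg; rewrite fp_reduced_cons => /and3P [ntr_x red_g head_xg].
apply: IH => //; last first.
  by move: head_xg; case: g {red_g} => //= y g head_xy;
  rewrite fp_same_factorC fp_same_factor_invl.
rewrite fp_reduced_cons fp_nontriv_inv ntr_x red_w /=.
by move: head_xw; case: w {red_w} => //= y w; rewrite fp_same_factor_invl.
Qed.

Lemma word_dist_nil_l h : D [::] h = nm h.
Proof. by []. Qed.

Lemma word_dist_nil_r g : red g -> D g [::] = nm g.
Proof.
move=> red_g; rewrite /D fp_mul_reduced ?cats0 ?fp_norm_inv //.
by rewrite -[finv g]cats0; apply: fp_reduced_inv_cat => //; case: g red_g.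
Qed.

Lemma word_dist_cons_eq x g h : red (x :: g) -> D (x :: g) (x :: h) = D g h.
Proof.
rewrite fp_reduced_cons => /and3P [ntr_x _ _].
by rewrite /D fp_mul_inv_cons fp_push_inv_cancel.
Qed.

Lemma word_dist_cons_neq x g y h : red (x :: g) -> red (y :: h) -> x != y ->
  D (x :: g) (y :: h) = nm g + ldist x y + nm h.
Proof.
move=> red_xg red_yh ne; case sf_xy: (sf x y); last first.
  rewrite /D fp_mul_reduced; last by apply: fp_reduced_inv_cat => //; rewrite sf_xy.
  rewrite fp_norm_cat fp_norm_inv !fp_norm_cons.
  by case: x y sf_xy {red_xg red_yh ne} => [a|b] [a'|b'] //= _; lra.
move: red_xg red_yh; rewrite !fp_reduced_cons => /and3P [ntr_x red_g head_xg].
move=> /and3P [_ red_h head_yh].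
have [c [push_c ntr_c sf_cy nrm_c]] := fp_push_inv_merge h ntr_x ne sf_xy.
rewrite /D fp_mul_inv_cons push_c fp_mul_reduced.
  by rewrite fp_norm_cat fp_norm_cons fp_norm_inv nrm_c addrA.
apply: fp_reduced_inv_cat => //.
  rewrite fp_reduced_cons ntr_c red_h /=.
  by move: head_yh; case: h {red_h push_c} => //= z h; rewrite (fp_same_factor_trans _ sf_cy).
move: head_xg; case: g {red_g} => //= z g.
by rewrite (fp_same_factorC z) (fp_same_factor_trans _ sf_cy) (fp_same_factor_trans _ sf_xy).
Qed.

Lemma word_dist_le g h : red g -> red h -> D g h <= nm g + nm h.
Proof.
elim: g h => [|x g IH] [|y h] red_g red_h.
- by rewrite word_dist_nil_l fp_norm_nil; lra.
- by rewrite word_dist_nil_l fp_norm_nil; lra.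
- by rewrite word_dist_nil_r // fp_norm_nil; lra.
have [red_g' red_h'] := (fp_reduced_behead red_g, fp_reduced_behead red_h).
rewrite !fp_norm_cons; case: (eqVneq x y) => [<-|ne].
  by rewrite word_dist_cons_eq //; have := IH h red_g' red_h'; have := wedge_norm_ge0 x; lra.
by rewrite word_dist_cons_neq //; have := wedge_dist_le_norm x y; lra.
Qed.

Lemma fp_norm_sub_le_word_dist g h : red g -> red h ->
  nm h - nm g <= D g h /\ nm g - nm h <= D g h.
Proof.
elim: g h => [|x g IH] [|y h] red_g red_h.
- by rewrite word_dist_nil_l fp_norm_nil; lra.
- by rewrite word_dist_nil_l fp_norm_nil; have := fp_norm_ge0 (y :: h); lra.
- by rewrite word_dist_nil_r // fp_norm_nil; have := fp_norm_ge0 (x :: g); lra.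
have [red_g' red_h'] := (fp_reduced_behead red_g, fp_reduced_behead red_h).
rewrite !fp_norm_cons; case: (eqVneq x y) => [<-|ne].
  by rewrite word_dist_cons_eq //; have := IH h red_g' red_h'; lra.
rewrite word_dist_cons_neq //; have := wedge_norm_le x y; have := wedge_norm_le y x.
by rewrite wedge_distC; have := fp_norm_ge0 g; have := fp_norm_ge0 h; lra.
Qed.

Fixpoint crossing (m : R) (w : seq (A + B)) : option (seq (A + B) * (A + B)) :=
  if w is x :: w' then
    if m <= nrm x then Some ([::], x) else
    if crossing (m - nrm x) w' is Some (p, y) then Some (x :: p, y) else None
  else None.

Lemma crossing_exists m w : 0 < m -> m <= nm w -> exists p x, crossing m w = Some (p, x).
Proof.
elim: w m => [|x w IH] m m_gt0 /=; first by rewrite fp_norm_nil; lra.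
rewrite fp_norm_cons; case: ifP => [_|/negbT]; first by exists [::], x.
rewrite -ltNge => lt_x m_le.
have [p [y ->]] := IH (m - nrm x) ltac:(lra) ltac:(lra).
by exists (x :: p), y.
Qed.

Lemma crossing_cases g h m p x q y : red g -> red h -> 0 < m ->
  crossing m g = Some (p, x) -> crossing m h = Some (q, y) ->
  (p = q /\ ldist x y <= D g h) \/ nm g - m < D g h \/ nm h - m < D g h.
Proof.
elim: g h m p x q y => [|z g IH] [|z' h] m p x q y red_g red_h m_gt0 //=.
have [red_g' red_h'] := (fp_reduced_behead red_g, fp_reduced_behead red_h).
rewrite !fp_norm_cons; case: (eqVneq z z') => [<-|ne].
  rewrite word_dist_cons_eq //; case: ifP => [_ [<- <-] [<- <-]|/negbT].
    by left; rewrite wedge_dist_xx; split=> //; exact: fp_norm_ge0.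
  rewrite -ltNge => lt_z.
  case cr_g: (crossing (m - nrm z) g) => [[p1 x1]|] // [<- <-].
  case cr_h: (crossing (m - nrm z) h) => [[q1 y1]|] // [<- <-].
  have m_z_gt0 : 0 < m - nrm z by lra.
  have [[-> ?]|[?|?]] := IH h _ _ _ _ _ red_g' red_h' m_z_gt0 cr_g cr_h.
  - by left.
  - by right; left; lra.
  - by right; right; lra.
rewrite word_dist_cons_neq //.
have [[ge0_g ge0_h] ge0_zz'] := (fp_norm_ge0 g, fp_norm_ge0 h, wedge_dist_ge0 z z').
case: ifP => [_|/negbT]; case: ifP => [_|/negbT] //; rewrite -?ltNge.
- by move=> [<- <-] [<- <-]; left; split => //; lra.
- by move=> lt_z' _ _; right; right; lra.
- by move=> lt_z _ _; right; left; lra.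
- by move=> _ lt_z _ _; right; left; lra.
Qed.

Lemma crossing_word_dist_le g h m p x y : red g -> red h ->
  crossing m g = Some (p, x) -> crossing m h = Some (p, y) ->
  D g h <= (nm g - m) + (nm h - m) + ldist x y.
Proof.
elim: p g h m => [|z p IH] [|x1 g] [|y1 h] m red_g red_h //=.
- case: ifP => [m_x1 [<-]|_]; last by case: (crossing _ g) => [[]|].
  case: ifP => [m_y1 [<-]|_]; last by case: (crossing _ h) => [[]|].
  have [red_g' red_h'] := (fp_reduced_behead red_g, fp_reduced_behead red_h).
  rewrite !fp_norm_cons; case: (eqVneq x1 y1) => [<-|ne]; last first.
    by rewrite word_dist_cons_neq //; lra.
  rewrite word_dist_cons_eq //; have := word_dist_le red_g' red_h'.
  by have := wedge_dist_ge0 x1 x1; lra.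
case: ifP => // _; case cr_g: (crossing (m - nrm x1) g) => [[p1 x2]|] // [Ex1 Ep1 Ex2].
case: ifP => // _; case cr_h: (crossing (m - nrm y1) h) => [[p2 y2]|] // [Ey1 Ep2 Ey2].
subst x1 y1 p1 p2 x y.
rewrite word_dist_cons_eq // !fp_norm_cons.
by have := IH _ _ _ (fp_reduced_behead red_g) (fp_reduced_behead red_h) cr_g cr_h; lra.
Qed.

Local Notation G := (FreeProd eA eB).
Local Notation fd := (fp_dist mulA invA eA mulB invB eB dA dB).

Lemma fp_distE (g h : G) : fd g h = D (sval g) (sval h).
Proof. by []. Qed.

Section Layers.
Variable Lr : R.
Hypothesis Lr_gt0 : 0 < Lr.

Definition in_layer (k : nat) (g : G) : Prop :=
  k%:R * Lr <= nm (sval g) < k.+1%:R * Lr.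

Definition layer_depth (k : nat) : R := k%:R * Lr - Lr / 2.

Definition bucket (k : nat) (p : seq (A + B)) (P : A + B -> Prop) (g : G) : Prop :=
  in_layer k g /\ exists2 x, crossing (layer_depth k) (sval g) = Some (p, x) & P x.

Definition layer_family (Q : (A + B -> Prop) -> Prop) (q : bool) : (G -> Prop) -> Prop :=
  fun S => (~~ q /\ S = in_layer 0) \/
    exists k p P, [/\ (0 < k)%N, odd k = q, Q P & S = bucket k p P].

Lemma layer_depth_ge k : (0 < k)%N -> Lr / 2 <= layer_depth k.
Proof.
move=> k_gt0; have : Lr <= k%:R * Lr by rewrite -{1}[Lr]mul1r ler_pM2r // ler1n.
by rewrite /layer_depth; lra.
Qed.

Lemma in_layer0_dist_le g h : in_layer 0 g -> in_layer 0 h -> fd g h <= 2 * Lr.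
Proof.
rewrite /in_layer mul0r mul1r fp_distE => /andP [_ lt_g] /andP [_ lt_h].
by have := word_dist_le (svalP g) (svalP h); lra.
Qed.

Lemma bucket_dist_le k p P g h DQ :
  (forall x y, P x -> P y -> ldist x y <= DQ) ->
  bucket k p P g -> bucket k p P h -> fd g h <= 3 * Lr + DQ.
Proof.
move=> P_bd [/andP [_ lt_g] [x cr_g Px]] [/andP [_ lt_h] [y cr_h Py]].
rewrite fp_distE; have := crossing_word_dist_le (svalP g) (svalP h) cr_g cr_h.
have := P_bd x y Px Py; move: lt_g lt_h; rewrite /layer_depth -addn1 natrD mulrDl mul1r.
lra.
Qed.

Lemma in_layer_far k k' g h : in_layer k g -> in_layer k' h ->
  (k.+2 <= k')%N \/ (k'.+2 <= k)%N -> Lr < fd g h.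
Proof.
have natr_le (i j : nat) : (i <= j)%N -> i%:R * Lr <= j%:R * Lr.
  by move=> le_ij; rewrite ler_pM2r // ler_nat.
have natrS (i : nat) : i.+1%:R * Lr = i%:R * Lr + Lr by rewrite -addn1 natrD mulrDl mul1r.
move=> /andP [ge_g lt_g] /andP [ge_h lt_h] far.
rewrite fp_distE; have [le_hg le_gh] := fp_norm_sub_le_word_dist (svalP g) (svalP h).
move: lt_g lt_h; rewrite !natrS => lt_g lt_h.
case: far => /natr_le; rewrite !natrS; lra.
Qed.

Lemma bucket_far r Q k p p' P P' g h :
  0 < r -> 2 * r < Lr -> r_disjoint ldist r Q -> Q P -> Q P' -> (0 < k)%N ->
  bucket k p P <> bucket k p' P' -> bucket k p P g -> bucket k p' P' h -> r < fd g h.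
Proof.
move=> r_gt0 r_lt Q_dis QP QP' k_gt0 neq [lay_g [x cr_g Px]] [lay_h [y cr_h Py]].
have depth_gt0 : 0 < layer_depth k by have := layer_depth_ge k_gt0; lra.
rewrite fp_distE; have [[Epq le_xy]|far] := crossing_cases (svalP g) (svalP h) depth_gt0 cr_g cr_h.
  subst p'; apply: lt_le_trans le_xy; apply: (Q_dis P P') => // EPP'.
  by apply: neq; rewrite EPP'.
move: lay_g lay_h => /andP [ge_g _] /andP [ge_h _]; rewrite /layer_depth in far; lra.
Qed.

Lemma layer_family_unif_bounded Q q : unif_bounded ldist Q -> unif_bounded fd (layer_family Q q).
Proof.
move=> [DQ Q_bd]; exists (3 * Lr + `|DQ|) => S [[_ ->]|[k [p [P [_ _ QP ->]]]]] g h Sg Sh.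
  by have := in_layer0_dist_le Sg Sh; have := normr_ge0 DQ; have := Lr_gt0; lra.
by have := bucket_dist_le (Q_bd P QP) Sg Sh; have := ler_norm DQ; lra.
Qed.

Lemma layer_family_r_disjoint r Q q : 0 < r -> 2 * r < Lr ->
  r_disjoint ldist r Q -> r_disjoint fd r (layer_family Q q).
Proof.
move=> r_gt0 r_lt Q_dis S S' S_fam S'_fam neq g h Sg S'h.
have far k k' : in_layer k g -> in_layer k' h -> (k.+2 <= k')%N \/ (k'.+2 <= k)%N ->
  r < fd g h by move=> lay_g lay_h /(in_layer_far lay_g lay_h); lra.
case: S_fam Sg neq => [[q0 ->]|[k [p [P [k_gt0 odd_k QP ->]]]]];
case: S'_fam S'h => [[q1 ->]|[k' [p' [P' [k'_gt0 odd_k' QP' ->]]]]] => Sh Sg neq.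
- by [].
- by apply: (far 0%N k' Sg Sh.1); left; rewrite -odd_k' in q0; lia.
- by apply: (far k 0%N Sg.1 Sh); right; rewrite -odd_k in q1; lia.
have [Ekk'|ne_kk'] := eqVneq k k'.
  by subst k'; exact: (bucket_far r_gt0 r_lt Q_dis QP QP' k_gt0 neq).
by apply: (far k k' Sg.1 Sh.1); rewrite -odd_k' in odd_k; lia.
Qed.

Lemma in_layer_cover (g : G) : in_layer 0 g \/
  exists k p x, [/\ (0 < k)%N, in_layer k g & crossing (layer_depth k) (sval g) = Some (p, x)].
Proof.
have norm_div_ge0 : 0 <= nm (sval g) / Lr by rewrite divr_ge0 ?fp_norm_ge0 ?ltW.
have /andP [] := truncn_itv norm_div_ge0.
rewrite ler_pdivlMr // ltr_pdivrMr //; set k := Num.truncn _ => ge_k lt_k.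
have lay_k : in_layer k g by apply/andP.
have [k0|k_gt0] := posnP k; first by left; rewrite -k0.
right; have [p [x cr]] : exists p x, crossing (layer_depth k) (sval g) = Some (p, x).
  by apply: crossing_exists; have := layer_depth_ge k_gt0; rewrite /layer_depth; lra.
by exists k, p, x.
Qed.

End Layers.

Lemma free_product_apc_of_wedge : asymptotic_property_C ldist -> asymptotic_property_C fd.
Proof.
move=> apcL Rs Rs_gt0 Rs_step.
have [m [F [F_bd F_dis coverF]]] := asymptotic_property_C_pairs apcL Rs_gt0 Rs_step.
have Rs_mono := nondecreasing_step Rs_step.
pose Lr := 4 * Rs m.*2.
have Lr_gt0 : 0 < Lr by rewrite /Lr; have := Rs_gt0 m.*2; lra.
exists m.*2, (fun j => layer_family Lr (F j./2) (odd j)); split.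
  move=> j lt_jm; split; first exact: layer_family_unif_bounded.
  apply: layer_family_r_disjoint => //.
  by rewrite /Lr; have := Rs_mono _ _ (ltnW lt_jm); have := Rs_gt0 m.*2; lra.
move=> g; case: (in_layer_cover Lr_gt0 g) => [lay0|[k [p [x [k_gt0 lay_k cr]]]]].
  have [i [lt_im _]] := coverF (inl eA).
  by exists 0%N; split; [lia | exists (in_layer Lr 0); split => //; left].
have [i [lt_im [P [FP Px]]]] := coverF x.
exists (odd k + i.*2)%N; split; first by case: (odd k); lia.
exists (bucket Lr k p P); split; last by split => //; exists x.
have odd_j : odd (odd k + i.*2) = odd k by rewrite oddD odd_double addbF; case: (odd k).
by right; exists k, p, P; rewrite odd_j half_bit_double; split.
Qed.

End FreeProductWords.

Theorem theorem4p4 (A B : eqType)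
  (mulA : A -> A -> A) (invA : A -> A) (eA : A)
  (mulB : B -> B -> B) (invB : B -> B) (eB : B)
  (R : realType) (dA : A -> A -> R) (dB : B -> B -> R) :
  is_group mulA invA eA -> is_group mulB invB eB ->
  countable_type A -> countable_type B ->
  is_metric dA -> left_invariant mulA dA -> proper_metric dA ->
  is_metric dB -> left_invariant mulB dB -> proper_metric dB ->
  asymptotic_property_C dA -> asymptotic_property_C dB ->
  asymptotic_property_C (fp_dist mulA invA eA mulB invB eB dA dB).
Proof.
move=> groupA groupB _ _ metric_dA invariant_dA _ metric_dB invariant_dB _ apcA apcB.
apply: (free_product_apc_of_wedge groupA groupB metric_dA invariant_dA metric_dB invariant_dB).
exact: wedge_apc.
Qed.
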